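(* Suppose the $L$-smoothness assumption holds and let $\{w_t\}$, $\{v_t\}$, $\{\hat D_t\}$ be generated by {\tt Scaled SARAH} with probability $p\in(0,1]$. Then for every $t\ge0$, $$\mathbb{E}\left[\|v_{t+1}-\nabla P(w_{t+1})\|^2\right]\le(1-p)\,\mathbb{E}\left[\|v_t-\nabla P(w_t)\|^2\right]+\frac{(1-p)L^2}{\alpha}\mathbb{E}\left[\|w_{t+1}-w_t\|^2_{\hat D_t}\right].$$
   Context: $P=\frac1n\sum_{i=1}^nf_i$ with $f_i:\mathbb{R}^d\to\mathbb{R}$. $L$-smoothness assumption: each $f_i$ and $P$ are twice differentiable with $L$-Lipschitz gradients. $\|x\|_D^2=x^TDx$. For $J\subseteq[n]$, $\nabla^2P_J(w)=\frac1{|J|}\sum_{j\in J}\nabla^2 f_j(w)$; $\odot$ is the Hadamard product; $\mathrm{diag}(x)$ is the diagonal matrix with the entries of $x$. Preconditioner (parameters $\alpha>0$, $\beta\in(0,1)$, $m\ge1$): $D_0=\frac1m\sum_{j=1}^m\mathrm{diag}(z_j\odot\nabla^2P_{\mathcal{J}_j}(w_0)z_j)$, $D_t=\beta D_{t-1}+(1-\beta)\mathrm{diag}(z_t\odot\nabla^2P_{\mathcal{J}_t}(w_t)z_t)$ for $t\ge1$, with independent Rademacher vectors $z$ and random index sets $\mathcal{J}\subseteq[n]$, independent of the gradient samples; $\hat D_t$ diagonal with $(\hat D_t)_{ii}=\max\{\alpha,|(D_t)_{ii}|\}$. {\tt Scaled SARAH} (input $w_0$, step-size $\eta>0$, $p$):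 $v_0=\nabla P(w_0)$; for $t\ge0$: $w_{t+1}=w_t-\eta\hat D_t^{-1}v_t$; draw $i_{t+1}$ uniformly from $[n]$, independently of everything else; with probability $p$ (independent coin), $v_{t+1}=\nabla P(w_{t+1})$, otherwise $v_{t+1}=v_t+\nabla f_{i_{t+1}}(w_{t+1})-\nabla f_{i_{t+1}}(w_t)$; update $\hat D_{t+1}$. *)

From HB Require Import structures.
From mathcomp Require Import all_boot all_order all_algebra.
From mathcomp Require Import all_classical all_reals all_analysis.
Set Implicit Arguments. Unset Strict Implicit. Unset Printing Implicit Defensive.
Import Order.TTheory GRing.Theory Num.Theory.
Import numFieldNormedType.Exports.
Local Open Scope ring_scope.
Local Open Scope classical_set_scope.

Definition sqnorm (R : realType) (d : nat) (x : 'rV[R]_d) : R :=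
  \sum_(k < d) (x 0 k) ^+ 2.

Definition enorm (R : realType) (d : nat) (x : 'rV[R]_d) : R := Num.sqrt (sqnorm x).

Definition Dnorm2 (R : realType) (d : nat) (D : 'M[R]_d) (x : 'rV[R]_d) : R :=
  (x *m D *m x^T) 0 0.

Definition grad (R : realType) (d : nat) (f : 'rV[R]_d -> R) (x : 'rV[R]_d) : 'rV[R]_d :=
  \row_(k < d) 'D_(delta_mx 0 k) f x.

(* Hessian: (hess f x) k l = d/dx_l (d f/dx_k)(x). *)
Definition hess (R : realType) (d : nat) (f : 'rV[R]_d -> R) (x : 'rV[R]_d) : 'M[R]_d :=
  ('J (grad f) x)^T.

Definition twice_diff_Lsmooth (R : realType) (d : nat) (L : R) (f : 'rV[R]_d -> R) : Prop :=
  (forall x, differentiable f x) /\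
  (forall x, differentiable (grad f) x) /\
  (forall x y, enorm (grad f x - grad f y) <= L * enorm (x - y)).

Definition Pobj (R : realType) (d n : nat) (f : 'I_n -> 'rV[R]_d -> R) : 'rV[R]_d -> R :=
  fun w => n%:R^-1 * \sum_(i < n) f i w.

Definition hessPJ (R : realType) (d n : nat) (f : 'I_n -> 'rV[R]_d -> R)
  (J : {set 'I_n}) (w : 'rV[R]_d) : 'M[R]_d :=
  #|J|%:R^-1 *: \sum_(j in J) hess (f j) w.

Definition radvec {R : realType} (d : nat) (s : {ffun 'I_d -> bool}) : 'rV[R]_d :=
  \row_(k < d) (if s k then 1 else -1).

Definition diag_hvp (R : realType) (d : nat) (z : 'rV[R]_d) (H : 'M[R]_d) : 'M[R]_d :=
  diag_mx (\row_(k < d) (z 0 k * (H *m z^T) k 0)).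

Definition Dhat (R : realType) (d : nat) (alpha : R) (D : 'M[R]_d) : 'M[R]_d :=
  \matrix_(i < d, j < d) (if i == j then Num.max alpha `|D i i| else 0).

Definition D_init (R : realType) (d n m : nat) (f : 'I_n -> 'rV[R]_d -> R)
  (z0 : 'I_m -> {ffun 'I_d -> bool}) (J0 : 'I_m -> {set 'I_n}) (w0 : 'rV[R]_d) : 'M[R]_d :=
  m%:R^-1 *: \sum_(j < m) diag_hvp (radvec (z0 j)) (hessPJ f (J0 j) w0).

(* Scaled SARAH run on a fixed realization of all random choices:
   z0, J0 : the m samples used in D_0;  zs t, Js t : the samples used in D_t (t >= 1);
   idx t, coin t : the index i_t and the coin at step t (t >= 1; coin = true means
   "with probability p" branch, i.e. full gradient). *)
Fixpoint sarah (R : realType) (d n m : nat) (f : 'I_n -> 'rV[R]_d -> R)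
  (alpha beta eta : R) (w0 : 'rV[R]_d)
  (z0 : 'I_m -> {ffun 'I_d -> bool}) (J0 : 'I_m -> {set 'I_n})
  (zs : nat -> {ffun 'I_d -> bool}) (Js : nat -> {set 'I_n})
  (idx : nat -> 'I_n) (coin : nat -> bool) (t : nat)
  : 'rV[R]_d * 'rV[R]_d * 'M[R]_d :=
  match t with
  | 0 => (w0, grad (Pobj f) w0, D_init f z0 J0 w0)
  | s.+1 =>
      let: (w, v, D) := sarah f alpha beta eta w0 z0 J0 zs Js idx coin s in
      let w' := w - eta *: (invmx (Dhat alpha D) *m v^T)^T in
      let i := idx s.+1 in
      let v' := if coin s.+1 then grad (Pobj f) w'
                else v + grad (f i) w' - grad (f i) w in
      let D' := beta *: D + (1 - beta) *: diag_hvp (radvec (zs s.+1)) (hessPJ f (Js s.+1) w') in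
      (w', v', D')
  end.

Definition history (T : Type) (d n m : nat)
  (z0 : 'I_m -> T -> {ffun 'I_d -> bool}) (J0 : 'I_m -> T -> {set 'I_n})
  (zs : nat -> T -> {ffun 'I_d -> bool}) (Js : nat -> T -> {set 'I_n})
  (idx : nat -> T -> 'I_n) (coin : nat -> T -> bool) (t : nat) (om : T)
  : {ffun 'I_m -> {ffun 'I_d -> bool} * {set 'I_n}} *
    {ffun 'I_t -> ({ffun 'I_d -> bool} * {set 'I_n}) * ('I_n * bool)} :=
  ([ffun j => (z0 j om, J0 j om)],
   [ffun s : 'I_t => ((zs s.+1 om, Js s.+1 om), (idx s.+1 om, coin s.+1 om))]).

(* A random element with values in a (finite) type is measurable w.r.t. the discrete
   sigma-algebra on its codomain. *)
Definition rv_measurable (dT : measure_display) (T : measurableType dT) (V : Type)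
  (X : T -> V) : Prop :=
  forall A : set V, measurable (X @^-1` A).

From HB Require Import structures.
From mathcomp Require Import all_boot all_order all_algebra.
From mathcomp Require Import all_classical all_reals all_analysis.
From mathcomp Require Import measurable_realfun.
From mathcomp.algebra_tactics Require Import ring lra.
Import Order.TTheory GRing.Theory Num.Theory.
Import numFieldNormedType.Exports.
Local Open Scope ring_scope.
Local Open Scope classical_set_scope.

Set Implicit Arguments. Unset Strict Implicit. Unset Printing Implicit Defensive.

(* Conditionally on the history up to time t, the state (w_t, v_t, D_t), and hence
   w_{t+1}, is fixed, while i_{t+1} is uniform and the coin is an independent
   Bernoulli(p) variable.  On a reset the error v_{t+1} - grad P(w_{t+1}) vanishes.
   Otherwise it is a + x_i - mean(x), with a = v_t - grad P(w_t) and
   x_i = grad f_i(w_{t+1}) - grad f_i(w_t); its mean square over i is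
   |a|^2 + Var(x) <= |a|^2 + mean |x_i|^2 <= |a|^2 + L^2 |w_{t+1} - w_t|^2, and
   |y|^2 <= |y|^2_{hat D_t} / alpha because hat D_t >= alpha I.  All random choices are
   finitely valued, so every expectation is a finite sum over the law of the
   history. *)

Section FiniteLaws.
Variables (R : realType) (dT : measure_display) (Omega : measurableType dT).
Variable mu : probability Omega R.

Definition measurable_fibers (K : Type) (X : Omega -> K) : Prop :=
  forall k, measurable (X @^-1` [set k]).

Lemma rv_measurable_fibers (K : Type) (X : Omega -> K) :
  rv_measurable X -> measurable_fibers X.
Proof. by move=> mX k; exact: mX. Qed.

Definition pmass (K : Type) (X : Omega -> K) (k : K) : R := fine (mu (X @^-1` [set k])).

Lemma measurable_fibers_pair (K1 K2 : Type) (X1 : Omega -> K1) (X2 : Omega -> K2) :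
  measurable_fibers X1 -> measurable_fibers X2 ->
  measurable_fibers (fun om => (X1 om, X2 om)).
Proof.
move=> mX1 mX2 [k1 k2].
have -> : (fun om => (X1 om, X2 om)) @^-1` [set (k1, k2)] =
          X1 @^-1` [set k1] `&` X2 @^-1` [set k2].
  by apply/seteqP; split => om /= [] -> ->.
exact: measurableI.
Qed.

Lemma measurable_fibers_ffun (I : finType) (K : Type) (X : I -> Omega -> K) :
  (forall i, measurable_fibers (X i)) ->
  measurable_fibers (fun om => [ffun i => X i om]).
Proof.
move=> mX g.
have -> : (fun om => [ffun i => X i om]) @^-1` [set g] =
          \bigcap_(i in [set: I]) X i @^-1` [set g i].
  apply/seteqP; split => om /=; first by move=> <- i _; rewrite ffunE.
  by move=> Xg; apply/ffunP => i; rewrite ffunE; exact: Xg.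
by apply: fin_bigcap_measurable => // i _; exact: mX.
Qed.

Lemma pmassE (K : Type) (X : Omega -> K) k :
  measurable (X @^-1` [set k]) -> mu (X @^-1` [set k]) = (pmass X k)%:E.
Proof.
move=> mXk; rewrite /pmass fineK // ge0_fin_numE ?measure_ge0 //.
exact: le_lt_trans (probability_le1 mu mXk) (ltry _).
Qed.

Lemma pmass_ge0 (K : Type) (X : Omega -> K) k : 0 <= pmass X k.
Proof. exact/fine_ge0/measure_ge0. Qed.

Lemma expectation_finite (K : finType) (X : Omega -> K) (G : K -> R) :
  measurable_fibers X -> (forall k, 0 <= G k) ->
  (\int[mu]_om (G (X om))%:E = (\sum_k pmass X k * G k)%:E)%E.
Proof.
move=> mX G0.
transitivity (\int[mu]_om (\sum_k (G k * \1_(X @^-1` [set k]) om)%:E))%E.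
  apply: eq_integral => om _; rewrite (bigD1 (X om)) //= indicE mem_set // mulr1.
  rewrite big1 ?adde0 // => k /negbTE kX; rewrite indicE memNset ?mulr0 //.
  by move=> /= Xk; rewrite Xk eqxx in kX.
rewrite ge0_integral_sum //; last 2 first.
- by move=> k; apply/measurable_EFinP/measurable_funM => //; exact: measurable_indic.
- by move=> k om _; rewrite lee_fin mulr_ge0.
rewrite -sumEFin; apply: eq_bigr => k _.
under eq_integral do rewrite EFinM.
rewrite ge0_integralZl_EFin //; last exact/measurable_EFinP/measurable_indic.
rewrite integral_indic // setIT.
by rewrite EFinM muleC; congr (_ * _)%E; exact: pmassE.
Qed.

Section IndependentUniformBernoulli.
Variables (K : finType) (n : nat) (p : R).
Variables (H : Omega -> K) (I : Omega -> 'I_n) (C : Omega -> bool).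
Hypotheses (mH : measurable_fibers H) (mI : measurable_fibers I)
  (mC : measurable_fibers C).
Hypothesis indep : forall A B D,
  mu (H @^-1` A `&` I @^-1` B `&` C @^-1` D)
  = (mu (H @^-1` A) * mu (I @^-1` B) * mu (C @^-1` D))%E.
Hypothesis I_uniform : forall i, mu (I @^-1` [set i]) = (n%:R^-1)%:E.
Hypothesis C_bernoulli : mu (C @^-1` [set true]) = p%:E.

Lemma pmass_indep h i c :
  pmass (fun om => (H om, I om, C om)) (h, i, c)
  = pmass H h * n%:R^-1 * (if c then p else 1 - p).
Proof.
rewrite /pmass.
have -> : (fun om => (H om, I om, C om)) @^-1` [set (h, i, c)] =
          H @^-1` [set h] `&` I @^-1` [set i] `&` C @^-1` [set c].
  by apply/seteqP; split => om /=; [case=> -> -> -> | case=> -[-> ->] ->].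
have mu_C : mu (C @^-1` [set c]) = (if c then p else 1 - p)%:E.
  case: c; first exact: C_bernoulli.
  have -> : C @^-1` [set false] = ~` (C @^-1` [set true]).
    by apply/seteqP; split => om /=; case: (C om).
  by rewrite probability_setC // C_bernoulli.
by rewrite indep (pmassE (mH h)) I_uniform mu_C.
Qed.

Lemma expectation_indep (G : K -> 'I_n -> bool -> R) :
  (forall h i c, 0 <= G h i c) ->
  (\int[mu]_om (G (H om) (I om) (C om))%:E
   = (\sum_h pmass H h * (n%:R^-1 * \sum_i (p * G h i true + (1 - p) * G h i false)))%:E)%E.
Proof.
move=> G0.
have mX := measurable_fibers_pair (measurable_fibers_pair mH mI) mC.
rewrite (expectation_finite (G := fun k => G k.1.1 k.1.2 k.2) mX) => [|k]; last exact: G0.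
congr EFin.
transitivity (\sum_h \sum_i \sum_c pmass (fun om => (H om, I om, C om)) (h, i, c) * G h i c).
  by rewrite pair_big pair_big; apply: eq_big => // -[[h i] c].
apply: eq_bigr => h _; rewrite big_distrr big_distrr /=; apply: eq_bigr => i _.
by rewrite big_bool /= !pmass_indep; ring.
Qed.

End IndependentUniformBernoulli.
End FiniteLaws.

Section SquaredNorms.
Variables (R : realType) (d : nat).
Implicit Types (x y : 'rV[R]_d).

Lemma sqnorm_ge0 x : 0 <= sqnorm x.
Proof. by apply: sumr_ge0 => k _; exact: sqr_ge0. Qed.

Lemma sqnorm0 : sqnorm (0 : 'rV[R]_d) = 0.
Proof. by rewrite /sqnorm big1 // => k _; rewrite mxE expr0n. Qed.

Lemma sqnorm_le_of_enorm_le (L : R) x y :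
  enorm x <= L * enorm y -> sqnorm x <= L ^+ 2 * sqnorm y.
Proof.
rewrite /enorm => xy.
rewrite -(sqr_sqrtr (sqnorm_ge0 x)) -(sqr_sqrtr (sqnorm_ge0 y)) -exprMn.
by rewrite ler_sqr ?nnegrE ?sqrtr_ge0 // (le_trans (sqrtr_ge0 _) xy).
Qed.

Lemma sqnorm_le_Dnorm2_Dhat (alpha : R) (D : 'M[R]_d) x :
  0 < alpha -> alpha * sqnorm x <= Dnorm2 (Dhat alpha D) x.
Proof.
move=> alpha_gt0; rewrite /Dnorm2 /sqnorm mxE big_distrr /=.
apply: ler_sum => k _; rewrite !mxE (bigD1 k) //= big1 => [|j /negbTE jk]; last first.
  by rewrite !mxE jk mulr0.
rewrite addr0 !mxE eqxx mulrAC -expr2 mulrC.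
by apply: ler_wpM2l; [exact: sqr_ge0 | rewrite le_max lexx].
Qed.

Lemma Dnorm2_Dhat_ge0 (alpha : R) (D : 'M[R]_d) x :
  0 < alpha -> 0 <= Dnorm2 (Dhat alpha D) x.
Proof.
move=> alpha_gt0; apply: le_trans (sqnorm_le_Dnorm2_Dhat D x alpha_gt0).
exact: mulr_ge0 (ltW alpha_gt0) (sqnorm_ge0 x).
Qed.

End SquaredNorms.

Lemma mean_sqr_centered_le (R : realFieldType) (n : nat) (a : R) (x : 'I_n -> R) :
  (0 < n)%N ->
  n%:R^-1 * \sum_(i < n) (a + x i - n%:R^-1 * \sum_(j < n) x j) ^+ 2
  <= a ^+ 2 + n%:R^-1 * \sum_(i < n) x i ^+ 2.
Proof.
move=> n_gt0; set y := n%:R^-1 * \sum_(j < n) x j.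
have n_neq0 : n%:R != 0 :> R by rewrite pnatr_eq0 -lt0n.
have sumE : \sum_(j < n) x j = n%:R * y by rewrite /y mulrA mulfV ?mul1r.
rewrite (eq_bigr (fun i => (a - y) ^+ 2 + 2 * (a - y) * x i + x i ^+ 2)) => [|i _]; last by ring.
rewrite !big_split /= sumr_const card_ord -big_distrr /= sumE -[(a - y) ^+ 2 *+ n]mulr_natl.
have -> : n%:R^-1 * (n%:R * (a - y) ^+ 2 + 2 * (a - y) * (n%:R * y)
          + \sum_(i < n) x i ^+ 2)
        = a ^+ 2 - y ^+ 2 + n%:R^-1 * \sum_(i < n) x i ^+ 2 by field.
by rewrite lerD2r lerBlDr lerDl sqr_ge0.
Qed.

Lemma mean_sqnorm_centered_le (R : realType) (d n : nat) (a : 'rV[R]_d)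
    (x : 'I_n -> 'rV[R]_d) :
  (0 < n)%N ->
  n%:R^-1 * \sum_(i < n) sqnorm (a + x i - n%:R^-1 *: \sum_(j < n) x j)
  <= sqnorm a + n%:R^-1 * \sum_(i < n) sqnorm (x i).
Proof.
move=> n_gt0; rewrite /sqnorm (exchange_big _ _ _ _ _ (fun i k => x i 0 k ^+ 2)).
rewrite (exchange_big _ _ _ _ _ (fun i k => (a + x i - _) 0 k ^+ 2)).
rewrite !big_distrr -big_split /=.
apply: ler_sum => k _; under eq_bigr do rewrite !mxE summxE.
exact: mean_sqr_centered_le.
Qed.


Lemma grad_Pobj (R : realType) (d n : nat) (f : 'I_n -> 'rV[R]_d -> R) x :
  (forall i, differentiable (f i) x) ->
  grad (Pobj f) x = n%:R^-1 *: \sum_(i < n) grad (f i) x.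
Proof.
move=> df; have -> : Pobj f = n%:R^-1 \*: \sum_(i < n) f i.
  by apply/funext => w; rewrite /Pobj /= fct_sumE.
apply/rowP => k; rewrite !mxE summxE.
rewrite deriveZ; last by apply: derivable_sum => i; exact: diff_derivable.
rewrite derive_sum => [|i]; last exact: diff_derivable.
by congr (_ * _); apply: eq_bigr => i _; rewrite mxE.
Qed.

Lemma mean_sqnorm_sarah_estimator_le (R : realType) (d n : nat)
    (f : 'I_n -> 'rV[R]_d -> R) (L : R) (V W W' : 'rV[R]_d) :
  (0 < n)%N -> (forall i, twice_diff_Lsmooth L (f i)) ->
  n%:R^-1 * \sum_(i < n) sqnorm (V + grad (f i) W' - grad (f i) W - grad (Pobj f) W')
  <= sqnorm (V - grad (Pobj f) W) + L ^+ 2 * sqnorm (W' - W).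
Proof.
move=> n_gt0 f_smooth.
have df x i : differentiable (f i) x by case: (f_smooth i).
pose x i := grad (f i) W' - grad (f i) W.
have centeredE i : V + grad (f i) W' - grad (f i) W - grad (Pobj f) W'
    = V - grad (Pobj f) W + x i - n%:R^-1 *: \sum_(j < n) x j.
  rewrite !grad_Pobj // /x sumrB scalerBr.
  set A := n%:R^-1 *: \sum_(j < n) grad (f j) W'.
  set B := n%:R^-1 *: \sum_(j < n) grad (f j) W.
  set a := grad (f i) W'; set b := grad (f i) W.
  by apply/rowP => k; rewrite !mxE; ring.
under eq_bigr do rewrite centeredE.
apply: le_trans (mean_sqnorm_centered_le _ _ n_gt0) _; rewrite lerD2l.
have n_neq0 : n%:R != 0 :> R by rewrite pnatr_eq0 -lt0n.
have -> : L ^+ 2 * sqnorm (W' - W) = n%:R^-1 * \sum_(i < n) L ^+ 2 * sqnorm (W' - W).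
  by rewrite sumr_const card_ord -(mulr_natl (L ^+ 2 * _)) mulKf.
rewrite ler_wpM2l ?invr_ge0 ?ler0n //.
apply: ler_sum => i _; apply: sqnorm_le_of_enorm_le.
by case: (f_smooth i) => _ [_ ->].
Qed.

Section ScaledSarah.
Variables (R : realType) (d n m : nat) (f : 'I_n -> 'rV[R]_d -> R).
Variables (alpha beta eta : R) (w0 : 'rV[R]_d).

Definition sarah_next_w (s : 'rV[R]_d * 'rV[R]_d * 'M[R]_d) : 'rV[R]_d :=
  s.1.1 - eta *: (invmx (Dhat alpha s.2) *m s.1.2^T)^T.

Definition sarah_next_v (s : 'rV[R]_d * 'rV[R]_d * 'M[R]_d) (i : 'I_n) (c : bool)
    : 'rV[R]_d :=
  if c then grad (Pobj f) (sarah_next_w s)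
  else s.1.2 + grad (f i) (sarah_next_w s) - grad (f i) s.1.1.

Lemma sarahS_wv z0 J0 zs Js idx coin t :
  let s := sarah f alpha beta eta w0 z0 J0 zs Js idx coin t in
  (@sarah R d n m f alpha beta eta w0 z0 J0 zs Js idx coin t.+1).1
  = (sarah_next_w s, sarah_next_v s (idx t.+1) (coin t.+1)).
Proof. by rewrite /=; case: sarah => [[]]. Qed.

Lemma eq_sarah z0 J0 zs Js idx coin z0' J0' zs' Js' idx' coin' t :
  z0 =1 z0' -> J0 =1 J0' ->
  (forall s, (0 < s <= t)%N ->
     [/\ zs s = zs' s, Js s = Js' s, idx s = idx' s & coin s = coin' s]) ->
  @sarah R d n m f alpha beta eta w0 z0 J0 zs Js idx coin t
  = sarah f alpha beta eta w0 z0' J0' zs' Js' idx' coin' t.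
Proof.
move=> /funext <- /funext <-.
elim: t => [//|t IH] eq_samples /=.
rewrite IH => [|s /andP[s_gt0 s_le]]; last by apply: eq_samples; rewrite s_gt0 ltnW.
by have [-> -> -> ->] := eq_samples t.+1 (leqnn _).
Qed.

(* The history stores the samples of steps 1, ..., t at indices 0, ..., t - 1; the
   dummy value a0 is never read by [sarah] up to step t. *)
Definition nth_sample (A : Type) (t : nat) (a0 : A) (e : {ffun 'I_t -> A}) (s : nat) : A :=
  if insub s.-1 is Some j then e j else a0.

Definition sarah_of_history (i0 : 'I_n) (t : nat)
    (h : {ffun 'I_m -> {ffun 'I_d -> bool} * {set 'I_n}} *
         {ffun 'I_t -> ({ffun 'I_d -> bool} * {set 'I_n}) * ('I_n * bool)}) :=
  let e := nth_sample (([ffun=> false], finset.set0), (i0, false)) h.2 in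
  sarah f alpha beta eta w0 (fun j => (h.1 j).1) (fun j => (h.1 j).2)
    (fun s => (e s).1.1) (fun s => (e s).1.2) (fun s => (e s).2.1) (fun s => (e s).2.2) t.

Lemma sarah_history (T : Type)
    (z0 : 'I_m -> T -> {ffun 'I_d -> bool}) (J0 : 'I_m -> T -> {set 'I_n})
    (zs : nat -> T -> {ffun 'I_d -> bool}) (Js : nat -> T -> {set 'I_n})
    (idx : nat -> T -> 'I_n) (coin : nat -> T -> bool) (i0 : 'I_n) t om :
  sarah f alpha beta eta w0 (fun j => z0 j om) (fun j => J0 j om)
    (fun s => zs s om) (fun s => Js s om) (fun s => idx s om) (fun s => coin s om) t
  = sarah_of_history i0 (history z0 J0 zs Js idx coin t om).
Proof.
rewrite /sarah_of_history /history /=.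
apply: eq_sarah => [j|j|s /andP[s_gt0 s_le]]; rewrite ?ffunE // /nth_sample.
case: insubP => [j _ jE|]; last by rewrite prednK // s_le.
by rewrite ffunE /= jE prednK.
Qed.

Lemma sqnorm_sarah_error_reset s i :
  sqnorm (sarah_next_v s i true - grad (Pobj f) (sarah_next_w s)) = 0.
Proof. by rewrite /sarah_next_v subrr sqnorm0. Qed.

Lemma mean_sqnorm_sarah_error_le (L : R) s :
  (0 < n)%N -> 0 < alpha -> (forall i, twice_diff_Lsmooth L (f i)) ->
  n%:R^-1 * \sum_i sqnorm (sarah_next_v s i false - grad (Pobj f) (sarah_next_w s))
  <= sqnorm (s.1.2 - grad (Pobj f) s.1.1)
     + L ^+ 2 / alpha * Dnorm2 (Dhat alpha s.2) (sarah_next_w s - s.1.1).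
Proof.
move=> n_gt0 alpha_gt0 f_smooth.
apply: le_trans (mean_sqnorm_sarah_estimator_le _ _ _ n_gt0 f_smooth) _.
rewrite lerD2l -mulrA ler_wpM2l ?sqr_ge0 // -(ler_pM2l alpha_gt0) mulrA.
by rewrite mulfV ?gt_eqF // mul1r sqnorm_le_Dnorm2_Dhat.
Qed.

End ScaledSarah.

Lemma measurable_fibers_history (dT : measure_display) (Omega : measurableType dT)
    (d n m t : nat)
    (z0 : 'I_m -> Omega -> {ffun 'I_d -> bool}) (J0 : 'I_m -> Omega -> {set 'I_n})
    (zs : nat -> Omega -> {ffun 'I_d -> bool}) (Js : nat -> Omega -> {set 'I_n})
    (idx : nat -> Omega -> 'I_n) (coin : nat -> Omega -> bool) :
  (forall j, rv_measurable (z0 j)) -> (forall j, rv_measurable (J0 j)) ->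
  (forall s, rv_measurable (zs s)) -> (forall s, rv_measurable (Js s)) ->
  (forall s, rv_measurable (idx s)) -> (forall s, rv_measurable (coin s)) ->
  measurable_fibers (history z0 J0 zs Js idx coin t).
Proof.
move=> Mz0 MJ0 Mzs MJs Midx Mcoin.
apply: measurable_fibers_pair; apply: measurable_fibers_ffun => j.
  by apply: measurable_fibers_pair; exact: rv_measurable_fibers.
by apply: measurable_fibers_pair; apply: measurable_fibers_pair; exact: rv_measurable_fibers.
Qed.

Theorem lemma4
  (R : realType) (d n m : nat) (f : 'I_n -> 'rV[R]_d -> R) (L : R)
  (alpha beta eta p : R) (w0 : 'rV[R]_d)
  (dT : measure_display) (Omega : measurableType dT) (mu : probability Omega R)
  (z0 : 'I_m -> Omega -> {ffun 'I_d -> bool}) (J0 : 'I_m -> Omega -> {set 'I_n})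
  (zs : nat -> Omega -> {ffun 'I_d -> bool}) (Js : nat -> Omega -> {set 'I_n})
  (idx : nat -> Omega -> 'I_n) (coin : nat -> Omega -> bool)
  (* the L-smoothness assumption *)
  (HfL : forall i, twice_diff_Lsmooth L (f i))
  (HPL : twice_diff_Lsmooth L (Pobj f))
  (* parameters *)
  (Hn : (0 < n)%N) (Hm : (0 < m)%N)
  (Halpha : 0 < alpha) (Hbeta : 0 < beta < 1) (Heta : 0 < eta) (Hp : 0 < p <= 1)
  (* all random choices are random variables (discrete codomains) *)
  (Mz0 : forall j, rv_measurable (z0 j)) (MJ0 : forall j, rv_measurable (J0 j))
  (Mzs : forall t, rv_measurable (zs t)) (MJs : forall t, rv_measurable (Js t))
  (Midx : forall t, rv_measurable (idx t)) (Mcoin : forall t, rv_measurable (coin t))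
  (* Rademacher vectors *)
  (Hz0 : forall j s, mu (z0 j @^-1` [set s]) = ((2 ^+ d)^-1 : R)%:E)
  (Hzs : forall t s, mu (zs t.+1 @^-1` [set s]) = ((2 ^+ d)^-1 : R)%:E)
  (* i_{t+1} uniform on [n], the coin is a Bernoulli(p) *)
  (Hidx : forall t k, mu (idx t.+1 @^-1` [set k]) = (n%:R^-1 : R)%:E)
  (Hcoin : forall t, mu (coin t.+1 @^-1` [set true]) = p%:E)
  (* i_{t+1}, the coin at step t+1, and everything drawn before are independent *)
  (Hind : forall t A B C,
     mu (history z0 J0 zs Js idx coin t @^-1` A `&` idx t.+1 @^-1` B `&` coin t.+1 @^-1` C)
     = (mu (history z0 J0 zs Js idx coin t @^-1` A) * mu (idx t.+1 @^-1` B)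
        * mu (coin t.+1 @^-1` C))%E)
  (t : nat) :
  let run om := sarah f alpha beta eta w0 (fun j => z0 j om) (fun j => J0 j om)
                  (fun s => zs s om) (fun s => Js s om) (fun s => idx s om) (fun s => coin s om) in
  let w s om := (run om s).1.1 in
  let v s om := (run om s).1.2 in
  let Dh s om := Dhat alpha (run om s).2 in
  (\int[mu]_om (sqnorm (v t.+1 om - grad (Pobj f) (w t.+1 om)))%:E
   <= (1 - p)%:E * \int[mu]_om (sqnorm (v t om - grad (Pobj f) (w t om)))%:E
      + ((1 - p) * L ^+ 2 / alpha)%:E
        * \int[mu]_om (Dnorm2 (Dh t om) (w t.+1 om - w t om))%:E)%E.
Proof.
pose H := history z0 J0 zs Js idx coin t.
pose S := @sarah_of_history _ _ _ m f alpha beta eta w0 (Ordinal Hn) t.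
have mH : measurable_fibers H by exact: measurable_fibers_history.
have runE om : sarah f alpha beta eta w0 (z0^~ om) (J0^~ om) (zs^~ om) (Js^~ om)
    (idx^~ om) (coin^~ om) t = S (H om) by exact: sarah_history.
cbv zeta beta.
under eq_integral => om _ do rewrite sarahS_wv runE /=.
under [X in (_ <= _ * X + _)%E]eq_integral => om _ do rewrite runE.
under [X in (_ <= _ + _ * X)%E]eq_integral => om _ do rewrite sarahS_wv runE /=.
rewrite (expectation_indep mH (rv_measurable_fibers (Midx t.+1))
  (rv_measurable_fibers (Mcoin t.+1)) (Hind t) (Hidx t) (Hcoin t)
  (fun h i c => sqnorm_ge0 (sarah_next_v f alpha eta (S h) i c
                            - grad (Pobj f) (sarah_next_w alpha eta (S h))))).
rewrite (expectation_finite mu mH (fun h => sqnorm_ge0 ((S h).1.2 - grad (Pobj f) (S h).1.1))).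
rewrite (expectation_finite mu mH (fun h => Dnorm2_Dhat_ge0 (S h).2
  (sarah_next_w alpha eta (S h) - (S h).1.1) Halpha)).
rewrite -!EFinM -EFinD lee_fin !big_distrr -big_split; apply: ler_sum => h _.
under eq_bigr do rewrite sqnorm_sarah_error_reset mulr0 add0r.
move: (mean_sqnorm_sarah_error_le eta (S h) Hn Halpha HfL) (pmass_ge0 mu H h).
rewrite -big_distrr /= => error_le q_ge0.
have p_le1 : 0 <= 1 - p by case/andP: Hp => _; rewrite subr_ge0.
have := mulr_ge0 q_ge0 p_le1; nra.
Qed.
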